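(* Let $n\in\mathbb{N}$, $0<\beta\le n$, and let $B$ be a Young function with complementary Young function $\bar B$. Then there is a constant $C_\beta>0$ such that for all functions $f,g$ and all cubes $Q$, \[ \frac{1}{\ell(Q)^\beta}\int_Q|fg|\,d\mathcal{H}^\beta_\infty\le C_\beta\|f\|_{B,Q,\mathcal{H}^\beta_\infty}\|g\|_{\bar B,Q,\mathcal{H}^\beta_\infty}. \]
   Context: $\mathcal{H}^\beta_\infty(E)=\inf\{\sum_i\omega_\beta r_i^\beta:E\subset\bigcup_iB(x_i,r_i)\}$, $\omega_\beta=\pi^{\beta/2}/\Gamma(\beta/2+1)$; integrals against $\mathcal{H}^\beta_\infty$ are Choquet integrals $\int_\Omega h\,d\mathcal{H}^\beta_\infty=\int_0^\infty\mathcal{H}^\beta_\infty(\{x\in\Omega:h>t\})\,dt$. Cubes are axis-parallel with side length $\ell(Q)$. A Young function $B:[0,\infty)\to[0,\infty)$ is continuous, convex, strictly increasing, with $B(0)=0$ and $B(t)\to\infty$ as $t\to\infty$; its complementary function is $\bar B(t)=\sup_{s>0}\{st-B(s)\}$. The mean Luxemburg quasinorm is $\|f\|_{B,Q,\mathcal{H}^\beta_\infty}=\inf\{\lambda>0:\ell(Q)^{-\beta}\int_QB(|f|/\lambda)\,d\mathcal{H}^\beta_\infty\le1\}$. *)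

From HB Require Import structures.
From mathcomp Require Import all_boot all_order all_algebra.
From mathcomp Require Import all_classical all_reals all_analysis.
Set Implicit Arguments. Unset Strict Implicit. Unset Printing Implicit Defensive.
Import Order.TTheory GRing.Theory Num.Theory.
Import numFieldNormedType.Exports.
Local Open Scope classical_set_scope.
Local Open Scope ring_scope.

Definition Gamma (R : realType) (s : R) : R :=
  fine (\int[lebesgue_measure]_(t in `]0%R, +oo[) ((powR t (s - 1)) * expR (- t))%:E)%E.

Definition omega (R : realType) (beta : R) : R :=
  powR pi (beta / 2) / Gamma (beta / 2 + 1).

Definition edist (R : realType) (n : nat) (x y : 'rV[R]_n) : R :=
  Num.sqrt (\sum_(i < n) (x ord0 i - y ord0 i) ^+ 2).

Definition eball (R : realType) (n : nat) (x : 'rV[R]_n) (r : R) : set 'rV[R]_n :=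
  [set y | edist x y <= r].

Definition hcontent (R : realType) (n : nat) (beta : R) (E : set 'rV[R]_n) : \bar R :=
  ereal_inf [set S : \bar R | exists (x : nat -> 'rV[R]_n) (r : nat -> R),
     (forall i, 0 <= r i) /\ E `<=` \bigcup_i eball (x i) (r i) /\
     S = (\sum_(0 <= i <oo) (omega beta * powR (r i) beta)%:E)%E].

Definition choquet (R : realType) (n : nat) (beta : R) (Omega : set 'rV[R]_n)
    (h : 'rV[R]_n -> \bar R) : \bar R :=
  (\int[lebesgue_measure]_(t in `[0%R, +oo[)
      hcontent beta [set x | Omega x /\ (t%:E < h x)%E])%E.

Definition cube (R : realType) (n : nat) (a : 'rV[R]_n) (l : R) : set 'rV[R]_n :=
  [set x | forall i : 'I_n, a ord0 i <= x ord0 i <= a ord0 i + l].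

(* Young function B : [0,oo) -> [0,oo) (only its values on [0,oo) matter) *)
Definition young (R : realType) (B : R -> R) : Prop :=
  [/\ B 0 = 0,
      {within `[0, +oo[, continuous B},
      (forall x y t, 0 <= x -> 0 <= y -> 0 <= t <= 1 ->
          B (t * x + (1 - t) * y) <= t * B x + (1 - t) * B y),
      (forall x y, 0 <= x -> x < y -> B x < B y) &
      B t @[t --> +oo] --> +oo].

Definition compl (R : realType) (B : R -> R) (t : R) : \bar R :=
  ereal_sup [set ((s * t - B s)%:E) | s in [set s : R | 0 < s]].

(* mean Luxemburg quasinorm ||f||_{Phi,Q,H^beta_infty} for cube Q = cube a l *)
Definition lux (R : realType) (n : nat) (beta : R) (Phi : R -> \bar R)
    (f : 'rV[R]_n -> R) (a : 'rV[R]_n) (l : R) : \bar R :=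
  ereal_inf [set lam%:E | lam in [set lam : R | 0 < lam /\
     ((powR l beta)^-1%:E * choquet beta (cube a l) (fun x => Phi (`|f x| / lam)%R) <= 1)%E]].

(* Young's inequality s t <= B s + Bbar t gives, for Luxemburg-admissible
   lam and mu, the pointwise bound |f g| <= lam mu (B(|f|/lam) + Bbar(|g|/mu)).
   The Choquet integral against H^beta_infty is monotone and positively
   homogeneous, and since H^beta_infty is countably subadditive (it is an
   infimum over countable covers) it is subadditive up to the factor 2.
   Hence the mean of |f g| over Q is at most 4 lam mu, and taking infima gives
   C_beta = 4.  If one of the two norms vanishes, that function is zero off an
   H^beta_infty-null set, so the left-hand side vanishes as well. *)

From HB Require Import structures.
From mathcomp Require Import all_boot all_order all_algebra.
From mathcomp Require Import all_classical all_reals all_analysis.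
From mathcomp Require Import measurable_realfun.
From mathcomp Require Import ring lra.
Set Implicit Arguments. Unset Strict Implicit. Unset Printing Implicit Defensive.
Import Order.TTheory GRing.Theory Num.Theory.
Import numFieldNormedType.Exports.
Local Open Scope classical_set_scope.
Local Open Scope ring_scope.

Section cover_content.
Local Open Scope ereal_scope.
Context {T I : Type} {R : realType} (P : set I) (K : I -> set T) (c : I -> \bar R).
Hypothesis c_ge0 : forall i, 0 <= c i.

Definition covering (X : set T) :=
  [set F : nat -> I | (forall k, P (F k)) /\ X `<=` \bigcup_k K (F k)].

Definition cover_content (X : set T) : \bar R :=
  ereal_inf [set \sum_(k <oo) c (F k) | F in covering X].

Lemma cover_content_ge0 X : 0 <= cover_content X.
Proof. by apply: le_ereal_inf_tmp => _ [F _ <-]; exact: nneseries_ge0. Qed.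

Lemma le_cover_content : {homo cover_content : A B / A `<=` B >-> A <= B}.
Proof.
move=> A B AB; apply: ereal_inf_le_tmp => _ [F [PF BF] <-].
by exists F => //; split => //; exact: subset_trans BF.
Qed.

Lemma cover_content_approx X (e : R) : (0 < e)%R -> cover_content X < +oo ->
  exists2 F, covering X F & \sum_(k <oo) c (F k) <= cover_content X + e%:E.
Proof.
move=> e0 Xoo; have Xfin : cover_content X \is a fin_num.
  by rewrite ge0_fin_numE ?cover_content_ge0.
by have [_ [F XF <-] /ltW] := lb_ereal_inf_adherent e0 Xfin; exists F.
Qed.

Lemma cover_content_bigcup_le (A : (set T)^nat) (G : nat -> nat -> I) :
  (forall k, covering (A k) (G k)) ->
  cover_content (\bigcup_k A k) <= \sum_(k <oo) \sum_(j <oo) c (G k j).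
Proof.
move=> AG; have /card_esym/ppcard_eqP[f] := card_nat2.
(* f enumerates nat * nat; the double series is the series along f. *)
pose F i := G (f i).1 (f i).2.
have cover_F : covering (\bigcup_k A k) F.
  split => [i|x [k _ /(AG k).2 [j _ Kx]]]; first exact: (AG _).1.
  by exists (f^-1%FUN (k, j)) => //; rewrite /F invK ?inE.
suff -> : \sum_(k <oo) \sum_(j <oo) c (G k j) = \sum_(i <oo) c (F i).
  by apply: ereal_inf_lbound; exists F.
rewrite [RHS]nneseries_esumT // -(reindex_esum setT setT f (fun p => c (G p.1 p.2))) //.
rewrite (_ : setT = setT `*`` fun=> setT); last by apply/seteqP; split.
rewrite -(esum_esum (a := fun i j => c (G i j))) //.
rewrite nneseries_esumT; last by move=> k; exact: nneseries_ge0.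
by apply: eq_esum => k _; rewrite nneseries_esumT.
Qed.

Lemma cover_content_sigma_subadditive : sigma_subadditive cover_content.
Proof.
move=> A; have [[k Akoo]|] := pselect (exists k, cover_content (A k) = +oo).
  rewrite (eseries_pinfty _ _ Akoo) ?leey // => i _.
  by rewrite gt_eqF // (lt_le_trans _ (cover_content_ge0 _)) ?ltNy0.
move=> /forallNP Afin; apply/lee_addgt0Pr => e e0.
have approx k : exists F, covering (A k) F /\
    \sum_(j <oo) c (F j) <= cover_content (A k) + (e / (2 ^ k.+1)%:R)%:E.
  have ek : (0 < e / (2 ^ k.+1)%:R)%R by rewrite divr_gt0.
  have Akfin : cover_content (A k) < +oo by rewrite ltey; apply/eqP; exact: Afin.
  by have [F ? ?] := cover_content_approx ek Akfin; exists F.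
have [G /all_and2[AG Gle]] := choice approx.
apply: le_trans (cover_content_bigcup_le AG) _.
apply: le_trans (epsilon_trick _ _ (ltW e0)); last by move=> k; exact: cover_content_ge0.
by apply: lee_nneseries => // k _ _; exact: nneseries_ge0.
Qed.
End cover_content.

Section hausdorff_content.
Local Open Scope ereal_scope.
Context {R : realType} {n : nat} (beta : R).
Local Notation H := (@hcontent R n beta).

Lemma omega_ge0 : (0 <= omega beta)%R.
Proof.
rewrite /omega divr_ge0 ?powR_ge0 // /Gamma fine_ge0 // integral_ge0 // => t _.
by rewrite lee_fin mulr_ge0 ?powR_ge0 ?expR_ge0.
Qed.

Lemma hcontentE : H = cover_content [set p : 'rV[R]_n * R | 0 <= p.2]%R
  (fun p => eball p.1 p.2) (fun p => (omega beta * powR p.2 beta)%:E).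
Proof.
apply/funext => E; congr ereal_inf; apply/seteqP; split.
- by move=> _ [x [r [r_ge0 [Ecov ->]]]]; exists (fun i => (x i, r i)).
- by move=> _ [F [F_ge0 Ecov] <-]; exists (fst \o F), (snd \o F).
Qed.

Let ball_cost_ge0 (p : 'rV[R]_n * R) : 0 <= (omega beta * powR p.2 beta)%:E.
Proof. by rewrite lee_fin mulr_ge0 ?omega_ge0 ?powR_ge0. Qed.

Lemma hcontent_ge0 E : 0 <= H E.
Proof. by rewrite hcontentE; exact: cover_content_ge0. Qed.

Lemma le_hcontent : {homo H : A B / A `<=` B >-> A <= B}.
Proof. by rewrite hcontentE; exact: le_cover_content. Qed.

Lemma hcontent_sigma_subadditive : sigma_subadditive H.
Proof. by rewrite hcontentE; exact: cover_content_sigma_subadditive. Qed.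

Lemma hcontent_bigcup_null (A : (set 'rV[R]_n)^nat) :
  (forall k, H (A k) = 0) -> H (\bigcup_k A k) = 0.
Proof.
move=> A0; apply/eqP; rewrite eq_le hcontent_ge0 andbT.
by apply: le_trans (hcontent_sigma_subadditive A) _; rewrite eseries0.
Qed.

Hypothesis beta_gt0 : (0 < beta)%R.

Lemma hcontent0 : H set0 = 0.
Proof.
apply/eqP; rewrite eq_le hcontent_ge0 andbT.
apply: ereal_inf_lbound; exists (fun=> 0%R), (fun=> 0%R); split => //; split => //.
by rewrite eseries0 // => i _ _; rewrite powR0 ?mulr0 // gt_eqF.
Qed.

Definition hcontent_outer_measure : {outer_measure set 'rV[R]_n -> \bar R} :=
  HB.pack H (isOuterMeasure.Build R _ H hcontent0 hcontent_ge0 le_hcontent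
    hcontent_sigma_subadditive).

Lemma hcontentU2 A B : H (A `|` B) <= H A + H B.
Proof. exact: (outer_measureU2 hcontent_outer_measure). Qed.

End hausdorff_content.

Section lebesgue_real_line.
Local Open Scope ereal_scope.
Context {R : realType}.
Local Notation mu := (@lebesgue_measure R).

Lemma nonincreasing_emeasurable (phi : R -> \bar R) :
  {homo phi : s t / (s <= t)%R >-> t <= s} -> measurable_fun setT phi.
Proof.
move=> phi_nonincr; apply: (measurability _ (ErealGenOInfty.measurableE R)) => //.
move=> /= _ [_ [a ->]] <-; apply: measurableI => //.
apply: is_interval_measurable => x y /= _ + z /andP[_ zy].
by rewrite !in_itv /= !andbT => /lt_le_trans; apply; exact: phi_nonincr.
Qed.

Lemma ge0_integral_dilation (psi : R -> \bar R) (c : R) : (0 < c)%R ->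
  measurable_fun setT psi -> (forall t, 0 <= psi t) ->
  \int[mu]_(t in `[0%R, +oo[) psi t = c%:E * \int[mu]_(t in `[0%R, +oo[) psi (c * t)%R.
Proof.
move=> c0 mpsi psi0; pose phi (t : measurableTypeR R) : measurableTypeR R := (c * t)%R.
have mphi : measurable_fun [set: measurableTypeR R] phi by apply: measurable_funM.
(* The measure instance of a pushforward depends on a measurability proof,
   hence pm is a function of that proof. *)
pose pm := (pushforward mu phi : {measure set (measurableTypeR R) -> \bar R}).
pose nu : {measure set (measurableTypeR R) -> \bar R} :=
  mscale (NngNum (ltW c0)) (pm mphi).
have phi_itv a b : phi @^-1` `]a, b]%classic = `](a / c)%R, (b / c)%R]%classic.
  apply/seteqP; split => t; rewrite /= !in_itv /= ltr_pdivrMr // ler_pdivlMr //;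
  by rewrite ![(t * c)%R]mulrC.
have mu_nu : forall A, measurable A -> mu A = nu A.
  apply: lebesgue_measure_unique => _ [[a b] _ <-].
  rewrite (_ : nu _ = c%:E * mu (phi @^-1` `]a, b])) //.
  rewrite phi_itv !lebesgue_measure_itv /= !lte_fin ltr_pM2r ?invr_gt0 //.
  case: ifPn => _; last by rewrite mule0.
  by rewrite -EFinD -EFinM -mulrBl mulrCA divff ?gt_eqF ?mulr1.
rewrite (eq_measure_integral nu) => [|A mA _]; last exact: mu_nu.
rewrite ge0_integral_mscale //; last exact: measurable_funS mpsi.
rewrite ge0_integral_pushforward //; last exact: measurable_funS mpsi.
congr (_ * integral _ _ _); apply/seteqP; split => t; rewrite /= !in_itv /= !andbT.
  by rewrite pmulr_rge0.
by move=> t0; rewrite mulr_ge0 // ltW.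
Qed.
End lebesgue_real_line.

Section choquet_integral.
Local Open Scope ereal_scope.
Context {R : realType} {n : nat} (beta : R).
Local Notation H := (@hcontent R n beta).
Local Notation mu := (@lebesgue_measure R).
Implicit Types (Om : set 'rV[R]_n) (h : 'rV[R]_n -> \bar R).

Definition superlevel Om h (t : R) := [set x | Om x /\ t%:E < h x].

Lemma le_superlevel Om h (s t : R) :
  (s <= t)%R -> superlevel Om h t `<=` superlevel Om h s.
Proof. by move=> st x [Omx htx]; split => //; apply: le_lt_trans htx; rewrite lee_fin. Qed.

Lemma measurable_hcontent_superlevel Om h (k : R) : (0 < k)%R ->
  measurable_fun setT (fun t : R => H (superlevel Om h (t / k))).
Proof.
move=> k_gt0; apply: nonincreasing_emeasurable => s t st.
by apply/le_hcontent/le_superlevel; rewrite ler_pM2r ?invr_gt0.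
Qed.

Lemma choquet_ge0 Om h : 0 <= choquet beta Om h.
Proof. by apply: integral_ge0 => t _; exact: hcontent_ge0. Qed.

Lemma le_choquet Om h h' : (forall x, Om x -> h x <= h' x) ->
  choquet beta Om h <= choquet beta Om h'.
Proof.
have mlevel h'' : measurable_fun setT (fun t : R => H (superlevel Om h'' t)).
  by apply: nonincreasing_emeasurable => s t st; exact/le_hcontent/le_superlevel.
move=> hh'; apply: ge0_le_integral => //.
- by move=> t _; exact: hcontent_ge0.
- exact: measurable_funTS (mlevel h).
- exact: measurable_funTS (mlevel h').
- move=> t _; apply: le_hcontent => x [Omx htx].
  by split => //; apply: lt_le_trans htx (hh' _ Omx).
Qed.

Lemma choquet_dilation Om h (k : R) : (0 < k)%R ->
  \int[mu]_(t in `[0%R, +oo[) H (superlevel Om h (t / k)) = k%:E * choquet beta Om h.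
Proof.
move=> k_gt0; have -> := ge0_integral_dilation k_gt0
  (measurable_hcontent_superlevel Om h k_gt0) (fun t => hcontent_ge0 _ _).
by apply: congr1; apply: eq_integral => t _; rewrite [(k * _)%R]mulrC mulfK ?gt_eqF.
Qed.

Lemma choquetZ Om h (k : R) : (0 < k)%R ->
  choquet beta Om (fun x => k%:E * h x) = k%:E * choquet beta Om h.
Proof.
move=> k_gt0; rewrite -choquet_dilation //; apply: eq_integral => t _.
congr H; apply/seteqP; split => x [Omx htx]; split => //; move: htx.
  by rewrite -lte_pdivrMl // -EFinM mulrC.
by rewrite -lte_pdivrMl // -EFinM mulrC.
Qed.

Lemma choquet_markov Om h (M : R) : (0 <= M)%R ->
  M%:E * H [set x | Om x /\ M%:E <= h x] <= choquet beta Om h.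
Proof.
move=> M_ge0; set E := [set x | _ /\ _].
have mlevel : measurable_fun setT (fun t : R => H (superlevel Om h t)).
  apply: nonincreasing_emeasurable => s t st; exact/le_hcontent/le_superlevel.
apply: (@le_trans _ _ (\int[mu]_(t in `[0%R, M[) H (superlevel Om h t))); last first.
  apply: ge0_subset_integral => //; first exact: measurable_funTS.
    by move=> t _; exact: hcontent_ge0.
  by move=> t; rewrite /= !in_itv /= => /andP[->].
apply: (@le_trans _ _ (\int[mu]_(t in `[0%R, M[) H E)).
  have muM : mu `[0%R, M[%classic = M%:E.
    rewrite lebesgue_measure_itv /= lte_fin.
    by case: ltgtP M_ge0 => // [M_gt0|<-] _; rewrite ?sube0.
  by rewrite integral_cst // -[X in _ <= _ * X]/(mu `[0%R, M[%classic) muM muleC.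
apply: ge0_le_integral => //.
- by move=> t _; exact: hcontent_ge0.
- exact: measurable_funTS.
move=> t; rewrite /= in_itv /= => /andP[_ tM]; apply: le_hcontent => x [Omx hx].
by split => //; apply: lt_le_trans hx; rewrite lte_fin.
Qed.

Lemma choquet_null Om h : H [set x | Om x /\ 0 < h x] = 0 -> choquet beta Om h = 0.
Proof.
move=> null; apply: integral0_eq => t; rewrite /= in_itv /= andbT => t_ge0.
apply/eqP; rewrite eq_le hcontent_ge0 andbT -[leRHS]null.
by apply/le_hcontent/le_superlevel.
Qed.

Hypothesis beta_gt0 : (0 < beta)%R.

Lemma choquetD_le Om h1 h2 :
  choquet beta Om (fun x => h1 x + h2 x) <=
  2%:E * (choquet beta Om h1 + choquet beta Om h2).
Proof.
rewrite ge0_muleDr ?choquet_ge0 // -!choquet_dilation //.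
rewrite -ge0_integralD //; last 4 first.
- by move=> t _; exact: hcontent_ge0.
- exact: measurable_funTS (measurable_hcontent_superlevel _ _ _).
- by move=> t _; exact: hcontent_ge0.
- exact: measurable_funTS (measurable_hcontent_superlevel _ _ _).
apply: ge0_le_integral => //.
- by move=> t _; exact: hcontent_ge0.
- apply: measurable_funTS; apply: nonincreasing_emeasurable => s t st.
  exact/le_hcontent/le_superlevel.
- apply: measurable_funTS; apply: emeasurable_funD;
    exact: measurable_hcontent_superlevel.
move=> t _; apply: le_trans (hcontentU2 beta_gt0 _ _); apply: le_hcontent.
(* {h1 + h2 > t} is covered by {h1 > t/2} and {h2 > t/2}. *)
move=> x [Omx hx]; rewrite /superlevel /=.
have [h1x|h1x] := ltP (t / 2)%:E (h1 x); [left|right] => //; split => //.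
rewrite ltNge; apply: contraTN hx => h2x; rewrite -leNgt.
by rewrite [t]splitr EFinD leeD.
Qed.

End choquet_integral.

Section young_function.
Local Open Scope ereal_scope.
Context {R : realType} (B : R -> R).

Lemma compl_ge (s t : R) : (0 < s)%R -> (s * t - B s)%:E <= compl B t.
Proof. by move=> s_gt0; apply: ereal_sup_ubound; exists s. Qed.

Lemma compl_nondecreasing (s t : R) :
  (0 <= s)%R -> (s <= t)%R -> compl B s <= compl B t.
Proof.
move=> s_ge0 st; apply: ge_ereal_sup => _ [u u_gt0 <-].
by apply: le_trans (compl_ge _ u_gt0); rewrite lee_fin lerD2r ler_pM2l.
Qed.

Lemma compl_unbounded (M : R) : exists2 u, (0 < u)%R & M%:E <= compl B u.
Proof.
exists (`|M| + `|B 1| + 1)%R; first by rewrite ltr_wpDl.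
apply: le_trans (compl_ge _ ltr01); rewrite lee_fin mul1r.
by have := ler_norm M; have := ler_norm (B 1); lra.
Qed.

Hypothesis youngB : young B.

Lemma young_nondecreasing (s t : R) :
  (0 <= s)%R -> (s <= t)%R -> (B s)%:E <= (B t)%:E.
Proof.
case: youngB => _ _ _ B_incr _ s_ge0; rewrite lee_fin le_eqVlt => /predU1P[->//|st].
exact/ltW/B_incr.
Qed.

Lemma young_unbounded (M : R) : exists2 u, (0 < u)%R & M%:E <= (B u)%:E.
Proof.
case: youngB => _ _ _ _ /cvgryPge /(_ M) [M0 [_ BM0]].
exists (`|M0| + 1)%R; first by rewrite ltr_wpDl.
by rewrite lee_fin; apply: BM0; rewrite (le_lt_trans (ler_norm M0)) // ltrDl.
Qed.

Lemma young_le_linear (s : R) : (0 <= s <= 1)%R -> (B s <= s * B 1)%R.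
Proof.
case: youngB => B0 _ B_convex _ _ s01.
have := B_convex 1%R 0%R s ler01 (lexx 0%R) s01.
by rewrite !mulr1 !mulr0 addr0 B0 mulr0 addr0.
Qed.

Lemma compl_ge0 (t : R) : (0 <= t)%R -> 0 <= compl B t.
Proof.
move=> t_ge0; apply/lee_addgt0Pr => e e_gt0; rewrite -leeBlDr // sub0e.
pose s := (Num.min 1 (e / (`|B 1| + 1)))%R.
have s_gt0 : (0 < s)%R by rewrite lt_min ltr01 divr_gt0 // ltr_wpDl.
have s_le1 : (s <= 1)%R by rewrite ge_min lexx.
have se : (s * `|B 1| <= e)%R.
  rewrite (@le_trans _ _ (s * (`|B 1| + 1)))%R ?ler_pM2l ?lerDl //.
  by rewrite -ler_pdivlMr ?ltr_wpDl // ge_min lexx orbT.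
apply: le_trans (compl_ge t s_gt0); rewrite lee_fin.
have := young_le_linear (s:=s); rewrite (ltW s_gt0) s_le1 => /(_ isT).
have := ler_norm (B 1); have := mulr_ge0 (ltW s_gt0) t_ge0; nra.
Qed.

Lemma young_inequality (s t : R) : (0 <= s)%R -> (0 <= t)%R ->
  (s * t)%:E <= (B s)%:E + compl B t.
Proof.
rewrite le_eqVlt => /predU1P[<-|s_gt0] t_ge0.
  by case: youngB => B0 _ _ _ _; rewrite mul0r B0 add0e compl_ge0.
move: (compl_ge t s_gt0); case: (compl B t) => [c||] //.
- by rewrite -EFinD !lee_fin => ?; lra.
- by rewrite addey ?leey.
Qed.

End young_function.

Section luxemburg_norm.
Local Open Scope ereal_scope.
Context {R : realType} {n : nat} (beta : R).
Local Notation H := (@hcontent R n beta).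

Definition luxemburg_admissible (Phi : R -> \bar R) (h : 'rV[R]_n -> R) a l (lam : R) :=
  (0 < lam)%R /\
  (powR l beta)^-1%:E * choquet beta (cube a l) (fun x => Phi (`|h x| / lam)%R) <= 1.

Lemma luxE Phi h a l :
  lux beta Phi h a l = ereal_inf (EFin @` luxemburg_admissible Phi h a l).
Proof. by []. Qed.

Lemma luxemburg_admissible_choquet Phi h a l lam : (0 < l)%R ->
  luxemburg_admissible Phi h a l lam ->
  choquet beta (cube a l) (fun x => Phi (`|h x| / lam)%R) <= (powR l beta)%:E.
Proof. by move=> l_gt0 [_]; rewrite lee_pdivrMl ?powR_gt0 // mule1. Qed.

Lemma choquet_mul_null Om (f g : 'rV[R]_n -> R) :
  H [set x | Om x /\ f x != 0%R] = 0 \/ H [set x | Om x /\ g x != 0%R] = 0 ->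
  choquet beta Om (fun x => (`|f x * g x|)%:E) = 0.
Proof.
move=> null; apply: choquet_null; apply/eqP; rewrite eq_le hcontent_ge0 andbT.
case: null => null; rewrite -[leRHS]null; apply: le_hcontent => x [Omx fgx].
  split => //.
  by apply: contraTneq fgx => ->; rewrite mul0r normr0 ltxx.
by split => //; apply: contraTneq fgx => ->; rewrite mulr0 normr0 ltxx.
Qed.

Variable Phi : R -> \bar R.
Hypothesis Phi_nondecreasing : forall s t, (0 <= s)%R -> (s <= t)%R -> Phi s <= Phi t.
Hypothesis Phi_unbounded : forall M : R, exists2 u, (0 < u)%R & M%:E <= Phi u.

Lemma lux_eq0_superlevel_null h a l (s : R) : (0 < l)%R -> (0 < s)%R ->
  lux beta Phi h a l = 0 -> H [set x | cube a l x /\ (s < `|h x|)%R] = 0.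
Proof.
move=> l_gt0 s_gt0 lux0; apply/eqP; rewrite eq_le hcontent_ge0 andbT.
apply/lee_addgt0Pr => e e_gt0; rewrite add0e.
have P_gt0 : (0 < powR l beta)%R by rewrite powR_gt0.
have [u u_gt0 Phi_u] := Phi_unbounded (powR l beta / e).
have : lux beta Phi h a l < (s / u)%:E by rewrite lux0 lte_fin divr_gt0.
move=> /ereal_inf_lt[_ [lam adm <-]]; rewrite lte_fin => lam_lt.
have lam_gt0 := adm.1.
rewrite -(@lee_pmul2l _ (powR l beta / e)%:E) ?lte_fin ?divr_gt0 //.
rewrite -EFinM divfK ?gt_eqF //.
apply: le_trans (luxemburg_admissible_choquet l_gt0 adm).
have M_ge0 : (0 <= powR l beta / e)%R by rewrite divr_ge0 // ltW.
apply: le_trans (choquet_markov beta _ (fun x => Phi (`|h x| / lam)%R) M_ge0).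
rewrite lee_pmul2l ?lte_fin ?divr_gt0 //; apply: le_hcontent => x [Qx hx].
split => //; apply: le_trans Phi_u _; apply: Phi_nondecreasing; first exact: ltW.
rewrite ler_pdivlMr // (le_trans _ (ltW hx)) //.
by rewrite -ler_pdivlMl // mulrC ltW.
Qed.

Lemma lux_eq0_null h a l : (0 < l)%R ->
  lux beta Phi h a l = 0 -> H [set x | cube a l x /\ h x != 0%R] = 0.
Proof.
move=> l_gt0 lux0; apply/eqP; rewrite eq_le hcontent_ge0 andbT.
pose E k := [set x | cube a l x /\ (k.+1%:R^-1 < `|h x|)%R].
rewrite -(@hcontent_bigcup_null _ _ beta E); last first.
  by move=> k; apply: lux_eq0_superlevel_null; rewrite ?invr_gt0.
apply: le_hcontent => x [Qx hx0]; exists (Num.truncn (`|h x|^-1)) => //; split => //.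
rewrite -[ltRHS]invrK ltf_pV2 ?posrE ?invr_gt0 ?normr_gt0 //.
exact: truncnS_gt.
Qed.

End luxemburg_norm.

Section ereal_inf_product.
Local Open Scope ereal_scope.
Context {R : realType}.

Lemma ereal_inf_EFin_ge0 (S : set R) :
  (forall x, S x -> 0 < x)%R -> 0 <= ereal_inf (EFin @` S).
Proof.
by move=> S_gt0; apply: le_ereal_inf_tmp => _ [x /S_gt0 x_gt0 <-]; rewrite lee_fin ltW.
Qed.

(* The hypotheses [!= 0] rule out the convention 0 * +oo = 0. *)
Lemma le_ereal_inf_mul (X : \bar R) (C : R) (S1 S2 : set R) : (0 < C)%R ->
  (forall x, S1 x -> 0 < x)%R -> (forall y, S2 y -> 0 < y)%R ->
  (forall x y, S1 x -> S2 y -> X <= (C * x * y)%:E) ->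
  ereal_inf (EFin @` S1) != 0 -> ereal_inf (EFin @` S2) != 0 ->
  X <= C%:E * ereal_inf (EFin @` S1) * ereal_inf (EFin @` S2).
Proof.
move=> C_gt0 S1_gt0 S2_gt0 XC I1_neq0 I2_neq0.
have I1_gt0 : 0 < ereal_inf (EFin @` S1) by rewrite lt0e I1_neq0 ereal_inf_EFin_ge0.
have I2_gt0 : 0 < ereal_inf (EFin @` S2) by rewrite lt0e I2_neq0 ereal_inf_EFin_ge0.
have X_le y : S2 y -> X <= C%:E * ereal_inf (EFin @` S1) * y%:E.
  move=> S2y; have Cy_gt0 : (0 < C * y)%R by rewrite mulr_gt0 // S2_gt0.
  rewrite muleAC -EFinM -ereal_inf_pZl //.
  by apply/ereal_infP => _ [_ [x S1x <-] <-]; rewrite -EFinM mulrAC XC.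
set z := C%:E * _ in X_le *; have : 0 < z by rewrite mule_gt0 ?lte_fin.
case: z X_le => [z X_le z_gt0| _ _|//]; last by rewrite gt0_mulye ?leey.
rewrite -ereal_inf_pZl //; apply/ereal_infP => _ [_ [y S2y <-] <-].
by rewrite X_le.
Qed.

End ereal_inf_product.

Section choquet_hoelder.
Local Open Scope ereal_scope.
Context {R : realType} {n : nat} (beta : R) (beta_gt0 : (0 < beta)%R).
Variable B : R -> R.
Hypothesis youngB : young B.

Lemma choquet_mul_le_young Om (f g : 'rV[R]_n -> R) (lam mu : R) :
  (0 < lam)%R -> (0 < mu)%R ->
  choquet beta Om (fun x => (`|f x * g x|)%:E) <=
  (2 * lam * mu)%:E * (choquet beta Om (fun x => (B (`|f x| / lam))%:E) +
                       choquet beta Om (fun x => compl B (`|g x| / mu))).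
Proof.
move=> lam_gt0 mu_gt0; have lammu_gt0 : (0 < lam * mu)%R by rewrite mulr_gt0.
rewrite -mulrA mulrC EFinM -muleA.
apply: le_trans (lee_wpmul2l _ (choquetD_le beta_gt0 _ _ _)); last by rewrite lee_fin ltW.
rewrite -choquetZ //; apply: le_choquet => x _.
rewrite (_ : `|f x * g x| = lam * mu * ((`|f x| / lam) * (`|g x| / mu)))%R; last first.
  by rewrite normrM; field; rewrite !gt_eqF.
rewrite EFinM lee_pmul2l ?lte_fin //.
by apply: (young_inequality youngB); rewrite divr_ge0 // ltW.
Qed.

Lemma mean_choquet_mul_le (f g : 'rV[R]_n -> R) (a : 'rV[R]_n) (l lam mu : R) :
  (0 < l)%R ->
  luxemburg_admissible beta (fun t => (B t)%:E) f a l lam ->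
  luxemburg_admissible beta (compl B) g a l mu ->
  (powR l beta)^-1%:E * choquet beta (cube a l) (fun x => (`|f x * g x|)%:E) <=
  (4 * lam * mu)%:E.
Proof.
move=> l_gt0 adm_f adm_g; have [lam_gt0 _] := adm_f; have [mu_gt0 _] := adm_g.
rewrite lee_pdivrMl ?powR_gt0 //.
apply: le_trans (choquet_mul_le_young _ _ _ lam_gt0 mu_gt0) _.
have lammu_ge0 : (0 <= 2 * lam * mu)%R by rewrite !mulr_ge0 // ltW.
apply: le_trans (lee_wpmul2l _ (leeD (luxemburg_admissible_choquet l_gt0 adm_f)
  (luxemburg_admissible_choquet l_gt0 adm_g))) _; first by rewrite lee_fin.
by rewrite -EFinD -!EFinM lee_fin le_eqVlt; apply/orP; left; apply/eqP; ring.
Qed.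

End choquet_hoelder.

Theorem lemma3p3 (R : realType) (n : nat) (beta : R) :
  0 < beta -> beta <= n%:R ->
  exists C : R, 0 < C /\
    forall (B : R -> R), young B ->
    forall (f g : 'rV[R]_n -> R) (a : 'rV[R]_n) (l : R), 0 < l ->
      ((powR l beta)^-1%:E * choquet beta (cube a l) (fun x => (`|f x * g x|)%R%:E)
        <= C%:E * lux beta (fun t => (B t)%:E) f a l * lux beta (compl B) g a l)%E.
Proof.
move=> beta_gt0 _; exists 4; split => // B youngB f g a l l_gt0.
rewrite !luxE; set Nf := ereal_inf _; set Ng := ereal_inf _.
have [N0|] := boolP ((Nf == 0%E) || (Ng == 0%E)).
  rewrite choquet_mul_null ?mule0; last first.
    case/orP: N0 => /eqP N0; [left|right]; apply: lux_eq0_null l_gt0 N0.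
    - exact: young_nondecreasing.
    - exact: young_unbounded.
    - exact: compl_nondecreasing.
    - exact: compl_unbounded.
  by rewrite !mule_ge0 // ereal_inf_EFin_ge0 // => ? [].
rewrite negb_or => /andP[Nf_neq0 Ng_neq0].
apply: (le_ereal_inf_mul (C := 4)) Nf_neq0 Ng_neq0 => [//|? []//|? []//|lam mu adm_f adm_g].
exact: (mean_choquet_mul_le beta_gt0 youngB l_gt0 adm_f adm_g).
Qed.
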